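(* Suppose Assumptions 1–4 hold and $p$ is convex. Let $$s=\inf\{q\ge0 : p(q)=\min_n C_n'(0)\},\qquad t=\inf\{q\ge0:\ \min_n C_n'(q)\ge p(q)+q\,\partial_+p(q)\}.$$ If $\partial_-p(s)<0$, then every Cournot candidate $\mathbf{x}$ satisfies $\gamma(\mathbf{x})\ge f\big(\partial_+p(t)/\partial_-p(s)\big)$.
   Context: Cournot model: $N$ suppliers, inverse demand $p:[0,\infty)\to[0,\infty)$, supplier $n$ has cost $C_n:[0,\infty)\to[0,\infty)$ and chooses $x_n\ge0$; $X=\sum_n x_n$. $\partial_\pm$ denote right/left derivatives; $C_n'(0)$ is the right derivative at $0$. Assumption 1: each $C_n$ is convex, continuous, nondecreasing on $[0,\infty)$, continuously differentiable on $(0,\infty)$, with $C_n(0)=0$. Assumption 2: $p$ is continuous, nonnegative, nonincreasing, $p(0)>0$; its right derivative at $0$ exists and at every $q>0$ its left and right derivatives exist. Assumption 3: there exists $R>0$ such that $p(R)\le\min_n C_n'(0)$ (this guarantees $s,t$ are finite). Assumption 4: $p(0)>\min_n C_n'(0)$. Social welfare of $\mathbf{x}\ge0$: $W(\mathbf{x})=\int_0^X p(q)\,dq-\sum_{n=1}^N C_n(x_n)$; a social optimum $\mathbf{x}^S$ maximizes $W$. Efficiency: $\gamma(\mathbf{x})=W(\mathbf{x})/W(\mathbf{x}^S)$. A nonnegative vector $\mathbf{x}$ is a Cournot candidate if for every $n$: $C_n'(x_n)\le p(X)+x_n\,\partial_-p(X)$ whenever $x_n>0$, and $C_n'(x_n)\ge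 p(X)+x_n\,\partial_+p(X)$. For $\overline c\ge1$: $f(\overline c)=\dfrac{\phi^2+2}{\phi^2+2\phi+\overline c}$ with $\phi=\max\left\{\dfrac{2-\overline c+\sqrt{\overline c^{\,2}-4\overline c+12}}{2},1\right\}$. *)

From Stdlib Require Import Reals Lra ClassicalEpsilon.
Open Scope R_scope.

(* Suppliers are indexed 0 .. N-1; a vector is a function nat -> R,
   only its first N entries matter. *)
Fixpoint sumN (N : nat) (f : nat -> R) : R :=
  match N with O => 0 | S k => sumN k f + f k end.

(* minN N f = min_{0 <= n < N} f n   (meaningful for N >= 1) *)
Fixpoint minN (N : nat) (f : nat -> R) : R :=
  match N with
  | O => 0
  | S k => match k with O => f O | _ => Rmin (minN k f) (f k) end
  end.

Definition right_deriv (f : R -> R) (x l : R) : Prop :=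
  forall eps, 0 < eps -> exists delta, 0 < delta /\
    forall h, 0 < h < delta -> Rabs ((f (x + h) - f x) / h - l) < eps.

Definition left_deriv (f : R -> R) (x l : R) : Prop :=
  forall eps, 0 < eps -> exists delta, 0 < delta /\
    forall h, 0 < h < delta -> Rabs ((f x - f (x - h)) / h - l) < eps.

Definition convex_on_nonneg (f : R -> R) : Prop :=
  forall x y lam, 0 <= x -> 0 <= y -> 0 <= lam <= 1 ->
    f (lam * x + (1 - lam) * y) <= lam * f x + (1 - lam) * f y.

Definition continuous_on_nonneg (f : R -> R) : Prop :=
  forall x, 0 <= x -> forall eps, 0 < eps -> exists delta, 0 < delta /\
    forall y, 0 <= y -> Rabs (y - x) < delta -> Rabs (f y - f x) < eps.

Definition nonincreasing_on_nonneg (f : R -> R) : Prop :=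
  forall x y, 0 <= x <= y -> f y <= f x.

Definition nondecreasing_on_nonneg (f : R -> R) : Prop :=
  forall x y, 0 <= x <= y -> f x <= f y.

Definition is_inf (S : R -> Prop) (m : R) : Prop :=
  (forall q, S q -> m <= q) /\
  (forall m', (forall q, S q -> m' <= q) -> m' <= m).

(* Riemann integral of f over [a,b] (its value when f is Riemann integrable) *)
Definition integral (f : R -> R) (a b : R) : R :=
  epsilon (inhabits 0)
    (fun v => exists pr : Riemann_integrable f a b, RiemannInt pr = v).

Definition assumption1 (N : nat) (C dC : nat -> R -> R) : Prop :=
  forall n, (n < N)%nat ->
    convex_on_nonneg (C n) /\ continuous_on_nonneg (C n) /\
    nondecreasing_on_nonneg (C n) /\
    (forall x, 0 < x -> derivable_pt_lim (C n) x (dC n x)) /\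
    (forall x, 0 < x -> continuity_pt (dC n) x) /\
    right_deriv (C n) 0 (dC n 0) /\
    C n 0 = 0.

Definition assumption2 (p dpl dpr : R -> R) : Prop :=
  continuous_on_nonneg p /\ (forall q, 0 <= q -> 0 <= p q) /\
  nonincreasing_on_nonneg p /\ 0 < p 0 /\
  (forall q, 0 <= q -> right_deriv p q (dpr q)) /\
  (forall q, 0 < q -> left_deriv p q (dpl q)).

Definition assumption3 (N : nat) (p : R -> R) (dC : nat -> R -> R) : Prop :=
  exists R0, 0 < R0 /\ p R0 <= minN N (fun n => dC n 0).

Definition assumption4 (N : nat) (p : R -> R) (dC : nat -> R -> R) : Prop :=
  minN N (fun n => dC n 0) < p 0.

Definition nonneg_vec (N : nat) (x : nat -> R) : Prop :=
  forall n, (n < N)%nat -> 0 <= x n.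

Definition welfare (N : nat) (p : R -> R) (C : nat -> R -> R) (x : nat -> R) : R :=
  integral p 0 (sumN N x) - sumN N (fun n => C n (x n)).

Definition social_optimum (N : nat) (p : R -> R) (C : nat -> R -> R)
    (xS : nat -> R) : Prop :=
  nonneg_vec N xS /\
  forall y, nonneg_vec N y -> welfare N p C y <= welfare N p C xS.

Definition efficiency (N : nat) (p : R -> R) (C : nat -> R -> R)
    (x xS : nat -> R) : R :=
  welfare N p C x / welfare N p C xS.

Definition cournot_candidate (N : nat) (p dpl dpr : R -> R)
    (dC : nat -> R -> R) (x : nat -> R) : Prop :=
  nonneg_vec N x /\
  forall n, (n < N)%nat ->
    (0 < x n -> dC n (x n) <= p (sumN N x) + x n * dpl (sumN N x)) /\
    p (sumN N x) + x n * dpr (sumN N x) <= dC n (x n).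

Definition phi_of (c : R) : R :=
  Rmax ((2 - c + sqrt (c ^ 2 - 4 * c + 12)) / 2) 1.

Definition f_bound (c : R) : R :=
  (phi_of c ^ 2 + 2) / (phi_of c ^ 2 + 2 * phi_of c + c).

From Stdlib Require Import Reals Lra Lia ClassicalEpsilon Classical_Prop.
From Coquelicot Require Import Coquelicot.
Open Scope R_scope.

(** Let x be a Cournot candidate with total output X, price P = p(X) and a
    largest supplier m.  Assumption 4 forces x_m > 0, so the first-order
    conditions of m squeeze the one-sided derivatives of the convex p at X
    into one value d <= 0; then C_n'(x_n) x_n = P x_n + d x_n^2 and
    C_n'(x_n) >= beta := P + d x_m for every n.  Convexity of the costs
    bounds the candidate's costs from above and those of any other vector
    from below, and the supporting line of p at X bounds int_0^X p from
    below.  Beyond X the price falls with slope at most dpl(s) < 0 until it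
    reaches min_n C_n'(0) <= beta at s, which caps int_X^Y p.  Since X lies
    in the set defining t, dpr(t) <= d, so c = dpr(t)/dpl(s) controls d and
    the two welfare estimates combine, through an elementary inequality
    satisfied by f(c), into the bound on the efficiency. *)

Lemma sumN_le N f g : (forall n, (n < N)%nat -> f n <= g n) -> sumN N f <= sumN N g.
Proof.
  induction N as [|N IH]; simpl; intros H; [lra|].
  assert (f N <= g N) by (apply H; lia).
  assert (sumN N f <= sumN N g) by (apply IH; intros; apply H; lia).
  lra.
Qed.

Lemma sumN_plus N f g : sumN N (fun n => f n + g n) = sumN N f + sumN N g.
Proof. induction N; simpl; lra. Qed.

Lemma sumN_scal N k f : sumN N (fun n => k * f n) = k * sumN N f.
Proof. induction N as [|N IH]; simpl; [lra|rewrite IH; ring]. Qed.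

Lemma sumN_zero N f : (forall n, (n < N)%nat -> f n = 0) -> sumN N f = 0.
Proof.
  induction N as [|N IH]; simpl; intros H; [lra|].
  rewrite IH, H; [lra|lia|intros; apply H; lia].
Qed.

Lemma sumN_nonneg N f : (forall n, (n < N)%nat -> 0 <= f n) -> 0 <= sumN N f.
Proof.
  induction N as [|N IH]; simpl; intros H; [lra|].
  assert (0 <= f N) by (apply H; lia).
  assert (0 <= sumN N f) by (apply IH; intros; apply H; lia).
  lra.
Qed.

Lemma sumN_term N f m :
  (forall n, (n < N)%nat -> 0 <= f n) -> (m < N)%nat -> f m <= sumN N f.
Proof.
  induction N as [|N IH]; simpl; intros H Hm; [lia|].
  assert (0 <= sumN N f) by (apply sumN_nonneg; intros; apply H; lia).
  destruct (Nat.eq_dec m N) as [->|Hne]; [lra|].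
  assert (f m <= sumN N f) by (apply IH; [intros; apply H; lia|lia]).
  assert (0 <= f N) by (apply H; lia).
  lra.
Qed.

Lemma argmax N f : (1 <= N)%nat ->
  exists m, (m < N)%nat /\ forall n, (n < N)%nat -> f n <= f m.
Proof.
  induction N as [|N IH]; intros H; [lia|].
  destruct (Nat.eq_dec N 0) as [->|HN0].
  - exists 0%nat; split; [lia|]; intros n Hn; replace n with 0%nat by lia; lra.
  - destruct IH as [m [Hm Hmax]]; [lia|].
    destruct (Rle_dec (f m) (f N)) as [Hle|Hle].
    + exists N; split; [lia|]; intros n Hn.
      destruct (Nat.eq_dec n N) as [->|]; [lra|].
      assert (f n <= f m) by (apply Hmax; lia); lra.
    + exists m; split; [lia|]; intros n Hn.
      destruct (Nat.eq_dec n N) as [->|]; [lra|apply Hmax; lia].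
Qed.

Lemma minN_le N f n : (n < N)%nat -> minN N f <= f n.
Proof.
  induction N as [|N IH]; intros H; [lia|]; simpl.
  destruct N as [|N]; [replace n with 0%nat by lia; lra|].
  destruct (Nat.eq_dec n (S N)) as [->|]; [apply Rmin_r|].
  eapply Rle_trans; [apply Rmin_l|apply IH; lia].
Qed.

Lemma minN_ge N f k : (1 <= N)%nat ->
  (forall n, (n < N)%nat -> k <= f n) -> k <= minN N f.
Proof.
  induction N as [|N IH]; intros HN H; [lia|]; simpl.
  destruct N as [|N]; [apply H; lia|].
  apply Rmin_glb; [apply IH; [lia|intros; apply H; lia]|apply H; lia].
Qed.

(** One-sided derivatives of convex functions on [0, oo). *)

Definition slope (f : R -> R) (a b : R) : R := (f b - f a) / (b - a).

Lemma slope_mul f a b : a <> b -> slope f a b * (b - a) = f b - f a.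
Proof. intros H; unfold slope; field; lra. Qed.

Lemma convex_slopes f u v w : convex_on_nonneg f -> 0 <= u -> u < v -> v < w ->
  slope f u v <= slope f u w <= slope f v w.
Proof.
  intros Hc Hu Huv Hvw.
  set (lam := (w - v) / (w - u)).
  assert (Hlam : 0 <= lam <= 1).
  { unfold lam; split.
    - apply Rmult_le_pos; [lra|left; apply Rinv_0_lt_compat; lra].
    - apply Rmult_le_reg_r with (w - u); [lra|].
      unfold Rdiv; rewrite Rmult_assoc, Rinv_l; lra. }
  pose proof (Hc u w lam Hu ltac:(lra) Hlam) as Hcv.
  replace (lam * u + (1 - lam) * w) with v in Hcv by (unfold lam; field; lra).
  assert (Hmid : (w - u) * f v <= (w - v) * f u + (v - u) * f w).
  { replace ((w - v) * f u + (v - u) * f w)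
      with ((w - u) * (lam * f u + (1 - lam) * f w)) by (unfold lam; field; lra).
    apply Rmult_le_compat_l; lra. }
  unfold slope; split; apply Rmult_le_reg_r with ((v - u) * (w - u) * (w - v));
    try (apply Rmult_lt_0_compat; [apply Rmult_lt_0_compat|]; lra);
    field_simplify; try lra; nra.
Qed.

Lemma limit_right_le (g : R -> R) (l B d0 : R) : 0 < d0 ->
  (forall eps, 0 < eps -> exists delta, 0 < delta /\
     forall h, 0 < h < delta -> Rabs (g h - l) < eps) ->
  (forall h, 0 < h < d0 -> g h <= B) -> l <= B.
Proof.
  intros Hd0 Hlim Hb. apply Rnot_lt_le; intros HBl.
  destruct (Hlim (l - B) ltac:(lra)) as [delta [Hdelta Hclose]].
  set (h := Rmin delta d0 / 2).
  assert (Hh : 0 < h < delta /\ h < d0).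
  { pose proof (Rmin_l delta d0); pose proof (Rmin_r delta d0).
    assert (0 < Rmin delta d0) by (apply Rmin_glb_lt; lra). unfold h; lra. }
  specialize (Hclose h ltac:(lra)); specialize (Hb h ltac:(lra)).
  apply Rabs_def2 in Hclose; lra.
Qed.

Lemma limit_right_ge (g : R -> R) (l B d0 : R) : 0 < d0 ->
  (forall eps, 0 < eps -> exists delta, 0 < delta /\
     forall h, 0 < h < delta -> Rabs (g h - l) < eps) ->
  (forall h, 0 < h < d0 -> B <= g h) -> B <= l.
Proof.
  intros Hd0 Hlim Hb.
  enough (- l <= - B) by lra.
  apply (limit_right_le (fun h => - g h) (- l) (- B) d0 Hd0).
  - intros eps Heps. destruct (Hlim eps Heps) as [delta [Hdelta Hclose]].
    exists delta; split; [exact Hdelta|]; intros h Hh.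
    replace (- g h - - l) with (- (g h - l)) by ring.
    rewrite Rabs_Ropp; auto.
  - intros h Hh; specialize (Hb h Hh); lra.
Qed.

Section ConvexDerivatives.
Variable f : R -> R.
Hypothesis Hconv : convex_on_nonneg f.

Lemma right_deriv_le_slope u v r : 0 <= u -> u < v -> right_deriv f u r ->
  r <= slope f u v.
Proof.
  intros Hu Huv Hr.
  apply (limit_right_le (fun h => (f (u + h) - f u) / h) r _ (v - u)); [lra|exact Hr|].
  intros h Hh.
  replace ((f (u + h) - f u) / h) with (slope f u (u + h))
    by (unfold slope; f_equal; ring).
  pose proof (convex_slopes f u (u + h) v Hconv ltac:(lra) ltac:(lra) ltac:(lra)); lra.
Qed.

Lemma slope_le_left_deriv u v l : 0 <= u -> u < v -> left_deriv f v l ->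
  slope f u v <= l.
Proof.
  intros Hu Huv Hl.
  apply (limit_right_ge (fun h => (f v - f (v - h)) / h) l _ (v - u)); [lra|exact Hl|].
  intros h Hh.
  replace ((f v - f (v - h)) / h) with (slope f (v - h) v)
    by (unfold slope; f_equal; ring).
  pose proof (convex_slopes f u (v - h) v Hconv ltac:(lra) ltac:(lra) ltac:(lra)); lra.
Qed.

Lemma left_deriv_le_slope v w l : 0 < v -> v < w -> left_deriv f v l ->
  l <= slope f v w.
Proof.
  intros Hv Hvw Hl.
  apply (limit_right_le (fun h => (f v - f (v - h)) / h) l _ v); [lra|exact Hl|].
  intros h Hh.
  replace ((f v - f (v - h)) / h) with (slope f (v - h) v)
    by (unfold slope; f_equal; ring).
  pose proof (convex_slopes f (v - h) v w Hconv ltac:(lra) ltac:(lra) ltac:(lra)); lra.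
Qed.

Lemma left_le_right_deriv v l r : 0 < v -> left_deriv f v l -> right_deriv f v r ->
  l <= r.
Proof.
  intros Hv Hl Hr.
  apply (limit_right_ge (fun h => (f (v + h) - f v) / h) r l 1); [lra|exact Hr|].
  intros h Hh.
  replace ((f (v + h) - f v) / h) with (slope f v (v + h))
    by (unfold slope; f_equal; ring).
  apply left_deriv_le_slope; [lra|lra|exact Hl].
Qed.

Lemma deriv_mono u v r l : 0 <= u -> u < v -> right_deriv f u r -> left_deriv f v l ->
  r <= l.
Proof.
  intros Hu Huv Hr Hl.
  pose proof (right_deriv_le_slope u v r Hu Huv Hr).
  pose proof (slope_le_left_deriv u v l Hu Huv Hl). lra.
Qed.

Lemma convex_tangent x y g : 0 <= x -> 0 <= y -> right_deriv f x g ->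
  (0 < x -> left_deriv f x g) -> f x + g * (y - x) <= f y.
Proof.
  intros Hx Hy Hr Hl.
  destruct (Rtotal_order x y) as [Hxy|[<-|Hyx]].
  - pose proof (right_deriv_le_slope x y g Hx Hxy Hr) as Hslope.
    pose proof (slope_mul f x y ltac:(lra)).
    assert (g * (y - x) <= slope f x y * (y - x)) by (apply Rmult_le_compat_r; lra).
    lra.
  - lra.
  - pose proof (slope_le_left_deriv y x g Hy Hyx (Hl ltac:(lra))) as Hslope.
    pose proof (slope_mul f y x ltac:(lra)).
    assert (slope f y x * (x - y) <= g * (x - y)) by (apply Rmult_le_compat_r; lra).
    lra.
Qed.

End ConvexDerivatives.

Lemma derivable_right_deriv f x l : derivable_pt_lim f x l -> right_deriv f x l.
Proof.
  intros H eps Heps. destruct (H eps Heps) as [delta Hd].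
  exists delta; split; [apply cond_pos|]. intros h Hh.
  apply Hd; [lra|rewrite Rabs_right; lra].
Qed.

Lemma derivable_left_deriv f x l : derivable_pt_lim f x l -> left_deriv f x l.
Proof.
  intros H eps Heps. destruct (H eps Heps) as [delta Hd].
  exists delta; split; [apply cond_pos|]. intros h Hh.
  specialize (Hd (- h) ltac:(lra) ltac:(rewrite Rabs_Ropp, Rabs_right; lra)).
  replace (x + - h) with (x - h) in Hd by ring.
  replace ((f x - f (x - h)) / h) with ((f (x - h) - f x) / - h) by (field; lra).
  exact Hd.
Qed.

Section Costs.
Variables (N : nat) (C dC : nat -> R -> R).
Hypothesis A1 : assumption1 N C dC.

Lemma cost_convex n : (n < N)%nat -> convex_on_nonneg (C n).
Proof. intros Hn; apply (A1 n Hn). Qed.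

Lemma cost_zero n : (n < N)%nat -> C n 0 = 0.
Proof. intros Hn; apply (A1 n Hn). Qed.

Lemma cost_right_deriv n y : (n < N)%nat -> 0 <= y -> right_deriv (C n) y (dC n y).
Proof.
  intros Hn Hy. destruct (A1 n Hn) as [_ [_ [_ [Hd [_ [H0 _]]]]]].
  destruct (Rle_lt_or_eq_dec 0 y Hy) as [Hpos|<-]; [|exact H0].
  apply derivable_right_deriv, Hd, Hpos.
Qed.

Lemma cost_left_deriv n y : (n < N)%nat -> 0 < y -> left_deriv (C n) y (dC n y).
Proof.
  intros Hn Hy. destruct (A1 n Hn) as [_ [_ [_ [Hd _]]]].
  apply derivable_left_deriv, Hd, Hy.
Qed.

Lemma marginal_cost_mono n u v : (n < N)%nat -> 0 <= u <= v -> dC n u <= dC n v.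
Proof.
  intros Hn Huv.
  destruct (Rle_lt_or_eq_dec u v ltac:(lra)) as [Hlt|<-]; [|lra].
  apply (deriv_mono (C n) (cost_convex n Hn) u v); try lra.
  - apply cost_right_deriv; [exact Hn|lra].
  - apply cost_left_deriv; [exact Hn|lra].
Qed.

Lemma cost_above_tangent n u y : (n < N)%nat -> 0 <= u -> 0 <= y ->
  C n u + dC n u * (y - u) <= C n y.
Proof.
  intros Hn Hu Hy. apply (convex_tangent (C n) (cost_convex n Hn)); auto.
  - apply cost_right_deriv; auto.
  - intros; apply cost_left_deriv; auto.
Qed.

End Costs.

(** Riemann integrals of a function continuous on [0, oo). *)

Lemma continuous_extend_by_zero_arg f x : continuous_on_nonneg f ->
  continuity_pt (fun q => f (Rmax 0 q)) x.
Proof.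
  intros Hc eps Heps.
  destruct (Hc (Rmax 0 x) (Rmax_l 0 x) eps Heps) as [delta [Hdelta Hclose]].
  exists delta; split; [exact Hdelta|]. intros y [_ Hy]. simpl in *. unfold R_dist in *.
  apply Hclose; [apply Rmax_l|].
  eapply Rle_lt_trans; [|exact Hy].
  unfold Rmax; destruct (Rle_dec 0 y), (Rle_dec 0 x);
    unfold Rabs; repeat destruct Rcase_abs; lra.
Qed.

Lemma ex_RInt_nonneg f a b : continuous_on_nonneg f -> 0 <= a -> 0 <= b -> ex_RInt f a b.
Proof.
  intros Hc Ha Hb.
  apply ex_RInt_ext with (f := fun q => f (Rmax 0 q)).
  - intros q Hq. rewrite Rmax_right; [reflexivity|].
    unfold Rmin in Hq; destruct (Rle_dec a b); lra.
  - apply (ex_RInt_continuous (V := R_CompleteNormedModule)). intros z _.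
    apply continuity_pt_filterlim, continuous_extend_by_zero_arg, Hc.
Qed.

Lemma integral_RInt f a b : ex_RInt f a b -> integral f a b = RInt f a b.
Proof.
  intros H. pose proof (ex_RInt_Reals_0 _ _ _ H) as pr.
  unfold integral.
  destruct (epsilon_spec (inhabits 0)
    (fun v => exists pr : Riemann_integrable f a b, RiemannInt pr = v)) as [pr' E].
  { exists (RiemannInt pr), pr; reflexivity. }
  rewrite <- E. symmetry; apply RInt_Reals.
Qed.

Lemma welfare_eq_RInt N p C y : continuous_on_nonneg p -> nonneg_vec N y ->
  welfare N p C y = RInt p 0 (sumN N y) - sumN N (fun n => C n (y n)).
Proof.
  intros Hp Hy. unfold welfare.
  rewrite integral_RInt; [reflexivity|].
  apply ex_RInt_nonneg; [exact Hp|lra|apply sumN_nonneg, Hy].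
Qed.

Lemma RInt_Chasles_nonneg f a b c : continuous_on_nonneg f -> 0 <= a -> 0 <= b -> 0 <= c ->
  RInt f a c = RInt f a b + RInt f b c.
Proof.
  intros Hf Ha Hb Hc. symmetry.
  apply (RInt_Chasles (V := R_CompleteNormedModule)); apply ex_RInt_nonneg; auto.
Qed.

Lemma is_RInt_affine A B a b :
  is_RInt (fun q => A + B * q) a b (A * (b - a) + B * (b * b - a * a) / 2).
Proof.
  replace (A * (b - a) + B * (b * b - a * a) / 2) with
    (minus ((fun q => A * q + B * (q * q) / 2) b) ((fun q => A * q + B * (q * q) / 2) a)).
  - apply (is_RInt_derive (V := R_CompleteNormedModule) (fun q => A * q + B * (q * q) / 2)).
    + intros q _. auto_derive; [auto|field].
    + intros q _. apply continuity_pt_filterlim. reg.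
  - unfold minus, plus, opp; simpl; field.
Qed.

Lemma RInt_le_affine f A B a b : a <= b -> ex_RInt f a b ->
  (forall q, a < q < b -> f q <= A + B * q) ->
  RInt f a b <= A * (b - a) + B * (b * b - a * a) / 2.
Proof.
  intros Hab Hf H. rewrite <- (is_RInt_unique _ _ _ _ (is_RInt_affine A B a b)).
  apply RInt_le; auto. eexists; apply is_RInt_affine.
Qed.

Lemma RInt_ge_affine f A B a b : a <= b -> ex_RInt f a b ->
  (forall q, a < q < b -> A + B * q <= f q) ->
  A * (b - a) + B * (b * b - a * a) / 2 <= RInt f a b.
Proof.
  intros Hab Hf H. rewrite <- (is_RInt_unique _ _ _ _ (is_RInt_affine A B a b)).
  apply RInt_le; auto. eexists; apply is_RInt_affine.
Qed.

Lemma RInt_le_const f A a b : a <= b -> ex_RInt f a b ->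
  (forall q, a < q < b -> f q <= A) -> RInt f a b <= A * (b - a).
Proof.
  intros Hab Hf H.
  replace (A * (b - a)) with (A * (b - a) + 0 * (b * b - a * a) / 2) by field.
  apply RInt_le_affine; auto. intros q Hq. rewrite Rmult_0_l, Rplus_0_r; auto.
Qed.

Lemma RInt_ge_const f A a b : a <= b -> ex_RInt f a b ->
  (forall q, a < q < b -> A <= f q) -> A * (b - a) <= RInt f a b.
Proof.
  intros Hab Hf H.
  replace (A * (b - a)) with (A * (b - a) + 0 * (b * b - a * a) / 2) by field.
  apply RInt_ge_affine; auto. intros q Hq. rewrite Rmult_0_l, Rplus_0_r; auto.
Qed.

Lemma RInt_gt_const f P X : continuous_on_nonneg f -> 0 < X ->
  (forall q, 0 <= q <= X -> P <= f q) -> P < f 0 -> P * X < RInt f 0 X.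
Proof.
  intros Hc HX Hlo Hf0.
  destruct (Hc 0 (Rle_refl 0) ((f 0 - P) / 2) ltac:(lra)) as [delta [Hdelta Hclose]].
  set (h := Rmin (delta / 2) X).
  assert (Hh : 0 < h <= X /\ h < delta).
  { pose proof (Rmin_l (delta / 2) X); pose proof (Rmin_r (delta / 2) X).
    assert (0 < Rmin (delta / 2) X) by (apply Rmin_glb_lt; lra). unfold h; lra. }
  rewrite (RInt_Chasles_nonneg f 0 h X) by (auto; lra).
  assert (Hnear : (P + (f 0 - P) / 2) * (h - 0) <= RInt f 0 h).
  { apply RInt_ge_const; [lra|apply ex_RInt_nonneg; auto; lra|].
    intros q Hq.
    specialize (Hclose q ltac:(lra) ltac:(rewrite Rminus_0_r, Rabs_right; lra)).
    apply Rabs_def2 in Hclose; lra. }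
  assert (Hfar : P * (X - h) <= RInt f h X).
  { apply RInt_ge_const; [lra|apply ex_RInt_nonneg; auto; lra|].
    intros q Hq; apply Hlo; lra. }
  assert (0 < (f 0 - P) / 2 * h) by (apply Rmult_lt_0_compat; lra).
  nra.
Qed.

(* Integral of a function lying below beta + max(D - a (q - X), 0) beyond X:
   the excess over beta is at most the triangle area D^2 / (2a). *)
Lemma RInt_le_capped_decay f beta D a X Y : continuous_on_nonneg f ->
  0 <= X <= Y -> 0 < a -> 0 <= D ->
  (forall q, X <= q -> f q <= beta + Rmax (D - a * (q - X)) 0) ->
  RInt f X Y <= beta * (Y - X) + D * D / (2 * a).
Proof.
  intros Hc HXY Ha HD Hup.
  set (Z := X + D / a).
  assert (HZ : a * (Z - X) = D) by (unfold Z; field; lra).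
  assert (HXZ : X <= Z) by nra.
  assert (Htri : forall Y', X <= Y' <= Z ->
            RInt f X Y' <= beta * (Y' - X) + D * D / (2 * a)).
  { intros Y' HY'.
    eapply Rle_trans.
    - apply (RInt_le_affine f (beta + D + a * X) (- a) X Y'); [lra|apply ex_RInt_nonneg; auto; lra|].
      intros q Hq. specialize (Hup q ltac:(lra)).
      rewrite Rmax_left in Hup by nra. lra.
    - assert (0 <= (D - a * (Y' - X)) ^ 2 / (2 * a))
        by (apply Rmult_le_pos; [apply pow2_ge_0|left; apply Rinv_0_lt_compat; lra]).
      replace ((beta + D + a * X) * (Y' - X) + - a * (Y' * Y' - X * X) / 2)
        with (beta * (Y' - X) + D * D / (2 * a) - (D - a * (Y' - X)) ^ 2 / (2 * a))
        by (field; lra).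
      lra. }
  destruct (Rle_dec Y Z) as [HYZ|HYZ]; [apply Htri; lra|].
  rewrite (RInt_Chasles_nonneg f X Z Y) by (auto; lra).
  assert (Hflat : RInt f Z Y <= beta * (Y - Z)).
  { apply RInt_le_const; [lra|apply ex_RInt_nonneg; auto; lra|].
    intros q Hq. specialize (Hup q ltac:(lra)).
    rewrite Rmax_right in Hup by nra. lra. }
  pose proof (Htri Z ltac:(lra)). lra.
Qed.

(* The infimum of a nonempty closed level set {q >= 0 | f q = c} of a
   continuous function belongs to the set (and the set is nonempty as soon
   as it has an infimum). *)
Lemma level_set_inf_attained f c s : continuous_on_nonneg f ->
  is_inf (fun q => 0 <= q /\ f q = c) s -> 0 <= s /\ f s = c.
Proof.
  intros Hc [Hlow Hgreatest].
  assert (Hs : 0 <= s) by (apply Hgreatest; intros q [Hq _]; exact Hq).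
  split; [exact Hs|]. apply NNPP; intros Hne.
  assert (Hgap : 0 < Rabs (f s - c)) by (apply Rabs_pos_lt; intros E; apply Hne; lra).
  destruct (Hc s Hs _ Hgap) as [delta [Hdelta Hclose]].
  destruct (classic (exists q, (0 <= q /\ f q = c) /\ q < s + delta))
    as [[q [[Hq Hfq] Hqs]]|Hnone].
  - assert (s <= q) by (apply Hlow; auto).
    specialize (Hclose q Hq ltac:(rewrite Rabs_right; lra)).
    rewrite Hfq, Rabs_minus_sym in Hclose. lra.
  - assert (s + delta <= s); [|lra].
    apply Hgreatest. intros q Hq. apply Rnot_lt_le. intros Hlt. apply Hnone; eauto.
Qed.

Lemma phi_of_spec c : 0 <= c -> 1 <= phi_of c /\
  ((phi_of c = 1 /\ 3 <= c) \/ phi_of c ^ 2 + (c - 2) * phi_of c - 2 = 0).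
Proof.
  intros Hc. unfold phi_of.
  set (S := sqrt (c ^ 2 - 4 * c + 12)).
  assert (HS : S * S = c ^ 2 - 4 * c + 12) by (unfold S; apply sqrt_sqrt; nra).
  assert (HS0 : 0 <= S) by apply sqrt_pos.
  unfold Rmax. destruct (Rle_dec ((2 - c + S) / 2) 1) as [H|H].
  - split; [lra|left; split; [reflexivity|nra]].
  - split; [lra|right; nra].
Qed.

(* The inequality that makes f(c) the efficiency bound: for 0 < m <= X,
   f(c) (X^2 + 2 m X + c m^2) <= X^2 + 2 m^2. *)
Lemma f_bound_key c X m : 0 <= c -> 0 < m -> m <= X ->
  f_bound c * (X * X + 2 * m * X + c * m * m) <= X * X + 2 * m * m.
Proof.
  intros Hc Hm HX. destruct (phi_of_spec c Hc) as [Hr1 Hroot]. unfold f_bound.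
  set (r := phi_of c) in *.
  assert (Hden : 0 < r ^ 2 + 2 * r + c) by nra.
  apply Rmult_le_reg_r with (r ^ 2 + 2 * r + c); [exact Hden|].
  replace ((r ^ 2 + 2) / (r ^ 2 + 2 * r + c) * (X * X + 2 * m * X + c * m * m)
             * (r ^ 2 + 2 * r + c))
    with ((r ^ 2 + 2) * (X * X + 2 * m * X + c * m * m)) by (field; lra).
  destruct Hroot as [[E Hc3]|E].
  - rewrite E.
    assert (0 <= (X - m) * (c * (X + m) - 6 * m)) by (apply Rmult_le_pos; nra).
    nra.
  - (* r times the difference is a sum of a square and a multiple of E *)
    assert (Id : r * ((X * X + 2 * m * m) * (r ^ 2 + 2 * r + c)
                      - (r ^ 2 + 2) * (X * X + 2 * m * X + c * m * m))
                 = (r ^ 2 + 2) * (X - r * m) ^ 2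
                   + (r ^ 2 + (c - 2) * r - 2) * (X * X - r * r * m * m)) by ring.
    rewrite E, Rmult_0_l, Rplus_0_r in Id.
    assert (0 <= (r ^ 2 + 2) * (X - r * m) ^ 2)
      by (apply Rmult_le_pos; [nra|apply pow2_ge_0]).
    assert (0 <= (X * X + 2 * m * m) * (r ^ 2 + 2 * r + c)
                 - (r ^ 2 + 2) * (X * X + 2 * m * X + c * m * m))
      by (apply Rmult_le_reg_l with r; lra).
    lra.
Qed.

Lemma f_bound_range c : 0 <= c -> 0 <= f_bound c <= 1.
Proof.
  intros Hc. destruct (phi_of_spec c Hc) as [Hr1 _]. unfold f_bound.
  set (r := phi_of c) in *.
  assert (Hden : 0 < r ^ 2 + 2 * r + c) by nra.
  split.
  - apply Rmult_le_pos; [nra|left; apply Rinv_0_lt_compat; exact Hden].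
  - apply Rmult_le_reg_r with (r ^ 2 + 2 * r + c); [exact Hden|].
    unfold Rdiv; rewrite Rmult_assoc, Rinv_l; lra.
Qed.

Lemma welfare_ratio_bound c e X m Q Wx WS :
  0 <= c -> 0 <= e -> 0 < m <= X -> m * m <= Q ->
  e * (X * X / 2 + Q) <= Wx -> 0 < Wx -> Wx <= WS ->
  WS <= Wx + e * (m * X - Q + c * (m * m) / 2) ->
  f_bound c <= Wx / WS.
Proof.
  intros Hc He Hm HQ HWx HWx0 HWxS HWS.
  pose proof (f_bound_key c X m Hc ltac:(lra) ltac:(lra)) as Hkey.
  pose proof (f_bound_range c Hc) as Hf.
  set (fb := f_bound c) in *.
  assert (Hexcess : fb * (m * X - Q + c * (m * m) / 2) <= (1 - fb) * (X * X / 2 + Q)) by nra.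
  assert (fb * WS <= Wx).
  { assert (fb * WS <= fb * Wx + fb * (e * (m * X - Q + c * (m * m) / 2))) by nra.
    assert (e * (fb * (m * X - Q + c * (m * m) / 2)) <= e * ((1 - fb) * (X * X / 2 + Q)))
      by (apply Rmult_le_compat_l; auto).
    assert ((1 - fb) * (e * (X * X / 2 + Q)) <= (1 - fb) * Wx)
      by (apply Rmult_le_compat_l; lra).
    nra. }
  apply Rmult_le_reg_r with WS; [lra|].
  unfold Rdiv; rewrite Rmult_assoc, Rinv_l; lra.
Qed.

Section CournotCandidate.
Variables (N : nat) (p dpl dpr : R -> R) (C dC : nat -> R -> R) (x : nat -> R) (m : nat).
Hypothesis A1 : assumption1 N C dC.
Hypothesis A4 : assumption4 N p dC.
Hypothesis Hpcont : continuous_on_nonneg p.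
Hypothesis Hpdec : nonincreasing_on_nonneg p.
Hypothesis Hpr : forall q, 0 <= q -> right_deriv p q (dpr q).
Hypothesis Hpl : forall q, 0 < q -> left_deriv p q (dpl q).
Hypothesis Hpconv : convex_on_nonneg p.
Hypothesis Hcand : cournot_candidate N p dpl dpr dC x.
Hypothesis Hm : (m < N)%nat.
Hypothesis Hmax : forall n, (n < N)%nat -> x n <= x m.

Local Notation c0 := (minN N (fun n => dC n 0)).
Local Notation X := (sumN N x).
Local Notation P := (p (sumN N x)).
Local Notation d := (dpr (sumN N x)).
Local Notation Q := (sumN N (fun n => x n * x n)).
Local Notation beta := (p (sumN N x) + dpr (sumN N x) * x m).

Lemma candidate_nonneg n : (n < N)%nat -> 0 <= x n.
Proof. apply Hcand. Qed.

Lemma total_output_nonneg : 0 <= X.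
Proof. apply sumN_nonneg, candidate_nonneg. Qed.

(* Nobody producing would force p 0 <= min_n C_n'(0), contradicting
   Assumption 4; so the largest supplier produces. *)
Lemma largest_output_pos : 0 < x m.
Proof.
  destruct (Rle_lt_or_eq_dec 0 (x m) (candidate_nonneg m Hm)) as [Hpos|Hzero];
    [exact Hpos|exfalso].
  assert (Hz : forall n, (n < N)%nat -> x n = 0).
  { intros n Hn. pose proof (Hmax n Hn). pose proof (candidate_nonneg n Hn). lra. }
  assert (HX : X = 0) by (apply sumN_zero, Hz).
  assert (p 0 <= c0).
  { apply minN_ge; [lia|]. intros n Hn. destruct Hcand as [_ Hfoc].
    destruct (Hfoc n Hn) as [_ Hlow]. rewrite Hz, HX in Hlow by exact Hn. lra. }
  unfold assumption4 in A4. lra.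
Qed.

Lemma total_output_pos : 0 < X.
Proof.
  pose proof (sumN_term N x m candidate_nonneg Hm). pose proof largest_output_pos. lra.
Qed.

(* The two first-order conditions of the largest supplier squeeze the
   one-sided derivatives of p at X together. *)
Lemma price_derivs_agree : dpl X = dpr X.
Proof.
  destruct Hcand as [_ Hfoc]. destruct (Hfoc m Hm) as [Hup Hlow].
  specialize (Hup largest_output_pos).
  pose proof largest_output_pos.
  assert (dpr X <= dpl X) by (apply Rmult_le_reg_l with (x m); lra).
  pose proof (left_le_right_deriv p Hpconv X (dpl X) (dpr X) total_output_pos
                (Hpl X total_output_pos) (Hpr X total_output_nonneg)).
  lra.
Qed.

Lemma price_slope_nonpos : d <= 0.
Proof.
  pose proof (right_deriv_le_slope p Hpconv X (X + 1) d total_output_nonneg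
                ltac:(lra) (Hpr X total_output_nonneg)) as Hslope.
  pose proof (Hpdec X (X + 1) ltac:(pose proof total_output_nonneg; lra)).
  unfold slope in Hslope. replace (X + 1 - X) with 1 in Hslope by ring. lra.
Qed.

Lemma price_above_tangent q : 0 <= q -> P + d * (q - X) <= p q.
Proof.
  intros Hq. apply (convex_tangent p Hpconv); auto using total_output_nonneg.
  intros HX. rewrite <- price_derivs_agree. apply Hpl, HX.
Qed.

(* Complementary slackness: C_n'(x_n) x_n = P x_n + d x_n^2. *)
Lemma first_order_condition n : (n < N)%nat ->
  dC n (x n) * x n = P * x n + d * (x n * x n).
Proof.
  intros Hn. destruct Hcand as [_ Hfoc]. destruct (Hfoc n Hn) as [Hup Hlow].
  destruct (Rle_lt_or_eq_dec 0 (x n) (candidate_nonneg n Hn)) as [Hpos|<-]; [|ring].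
  specialize (Hup Hpos). rewrite price_derivs_agree in Hup.
  replace (dC n (x n)) with (P + x n * d) by lra. ring.
Qed.

Lemma marginal_cost_ge_beta n : (n < N)%nat -> beta <= dC n (x n).
Proof.
  intros Hn. destruct Hcand as [_ Hfoc]. destruct (Hfoc n Hn) as [_ Hlow].
  pose proof (Hmax n Hn). pose proof price_slope_nonpos. nra.
Qed.

Lemma min_marginal_cost_le_beta : c0 <= beta.
Proof.
  assert (E : dC m (x m) = beta).
  { pose proof (first_order_condition m Hm). pose proof largest_output_pos.
    apply Rmult_eq_reg_r with (x m); lra. }
  rewrite <- E. eapply Rle_trans; [apply (minN_le N (fun n => dC n 0) m Hm)|].
  apply (marginal_cost_mono N C dC A1); [exact Hm|].
  pose proof largest_output_pos; lra.
Qed.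

(* Convexity of the costs between 0 and x_n bounds the candidate's costs. *)
Lemma candidate_cost_le : sumN N (fun n => C n (x n)) <= P * X + d * Q.
Proof.
  rewrite <- !sumN_scal, <- sumN_plus. apply sumN_le. intros n Hn.
  pose proof (cost_above_tangent N C dC A1 n (x n) 0 Hn (candidate_nonneg n Hn) (Rle_refl 0))
    as Htan.
  rewrite (cost_zero N C dC A1 n Hn) in Htan.
  pose proof (first_order_condition n Hn). lra.
Qed.

(* Convexity of the costs at x_n bounds the costs of any other vector y. *)
Lemma cost_ge_candidate y : nonneg_vec N y ->
  sumN N (fun n => C n (x n)) + beta * sumN N y - (P * X + d * Q)
  <= sumN N (fun n => C n (y n)).
Proof.
  intros Hy.
  replace (sumN N (fun n => C n (x n)) + beta * sumN N y - (P * X + d * Q))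
    with (sumN N (fun n => C n (x n) + (beta * y n + (- P * x n + - d * (x n * x n)))))
    by (rewrite !sumN_plus, !sumN_scal; ring).
  apply sumN_le. intros n Hn.
  pose proof (cost_above_tangent N C dC A1 n (x n) (y n) Hn (candidate_nonneg n Hn) (Hy n Hn)).
  pose proof (first_order_condition n Hn). pose proof (marginal_cost_ge_beta n Hn).
  pose proof (Hy n Hn). nra.
Qed.

(* X belongs to the set whose infimum is t, hence dpr t <= d. *)
Lemma right_deriv_at_t_le t :
  is_inf (fun q => 0 <= q /\ p q + q * dpr q <= minN N (fun n => dC n q)) t ->
  dpr t <= d.
Proof.
  intros [Hlow Hgreatest].
  pose proof total_output_nonneg as HX0. pose proof price_slope_nonpos.
  assert (Ht0 : 0 <= t) by (apply Hgreatest; intros q [Hq _]; exact Hq).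
  assert (HtX : t <= X).
  { apply Hlow. split; [exact HX0|]. apply minN_ge; [lia|]. intros n Hn.
    destruct Hcand as [_ Hfoc]. destruct (Hfoc n Hn) as [_ Hlow_n].
    pose proof (sumN_term N x n candidate_nonneg Hn).
    pose proof (marginal_cost_mono N C dC A1 n (x n) X Hn
                  ltac:(pose proof (candidate_nonneg n Hn); lra)).
    nra. }
  destruct (Rle_lt_or_eq_dec t X HtX) as [Hlt| ->]; [|lra].
  rewrite <- price_derivs_agree.
  apply (deriv_mono p Hpconv t X); auto.
  apply Hpl, total_output_pos.
Qed.

Lemma price_lt_initial s : 0 <= s -> p s = c0 -> P < p 0.
Proof.
  intros Hs Hps. pose proof price_slope_nonpos. pose proof total_output_pos.
  pose proof (price_above_tangent 0 (Rle_refl 0)).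
  destruct (Rlt_or_le d 0) as [Hneg|Hzero]; [nra|].
  pose proof (price_above_tangent s Hs). pose proof min_marginal_cost_le_beta.
  unfold assumption4 in A4. replace d with 0 in * by lra. lra.
Qed.

Lemma integral_to_total_ge : P * X - d * X * X / 2 <= RInt p 0 X.
Proof.
  pose proof total_output_nonneg.
  replace (P * X - d * X * X / 2) with ((P - d * X) * (X - 0) + d * (X * X - 0 * 0) / 2)
    by field.
  apply RInt_ge_affine; [lra|apply ex_RInt_nonneg; auto; lra|].
  intros q Hq. pose proof (price_above_tangent q ltac:(lra)). lra.
Qed.

Lemma integral_to_total_gt s : 0 <= s -> p s = c0 -> P * X < RInt p 0 X.
Proof.
  intros Hs Hps. apply (RInt_gt_const p P X Hpcont total_output_pos).
  - intros q Hq. apply Hpdec; lra.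
  - exact (price_lt_initial s Hs Hps).
Qed.

(* Beyond X the price falls from P with slope at most dpl s < 0 until it
   reaches c0 <= beta at s; this caps the extra surplus any larger total
   output can collect. *)
Lemma integral_beyond_total s Y : 0 <= s -> p s = c0 -> dpl s < 0 -> 0 <= Y ->
  RInt p X Y <= beta * (Y - X) + (- d * x m) * (- d * x m) / (2 * - dpl s).
Proof.
  intros Hs Hps Hdls HY.
  pose proof total_output_nonneg as HX0. pose proof price_slope_nonpos.
  pose proof largest_output_pos.
  assert (Hexcess : 0 <= (- d * x m) * (- d * x m) / (2 * - dpl s))
    by (apply Rmult_le_pos; [nra|left; apply Rinv_0_lt_compat; lra]).
  destruct (Rle_dec X Y) as [HXY|HYX].
  - apply RInt_le_capped_decay; auto; [lra|nra|].
    intros q Hq. destruct (Rle_lt_dec s q) as [Hsq|Hqs].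
    + pose proof (Hpdec s q ltac:(lra)). pose proof min_marginal_cost_le_beta.
      pose proof (Rmax_r (- d * x m - - dpl s * (q - X)) 0). lra.
    + eapply Rle_trans; [|apply Rplus_le_compat_l, Rmax_l].
      destruct (Rle_lt_or_eq_dec X q Hq) as [HXq|<-]; [|lra].
      (* on [X, s] the graph of p lies below the chord, whose slope is at
         most dpl s *)
      pose proof (convex_slopes p X q s Hpconv HX0 HXq Hqs) as [Hchord _].
      pose proof (slope_le_left_deriv p Hpconv X s (dpl s) HX0 ltac:(lra) (Hpl s ltac:(lra))).
      pose proof (slope_mul p X q ltac:(lra)).
      assert (slope p X q * (q - X) <= dpl s * (q - X)) by (apply Rmult_le_compat_r; lra).
      lra.
  - apply Rnot_le_lt in HYX.
    rewrite <- (opp_RInt_swap p Y X) by (apply ex_RInt_nonneg; auto).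
    assert (beta * (X - Y) <= RInt p Y X).
    { apply RInt_ge_const; [lra|apply ex_RInt_nonneg; auto|].
      intros q Hq. pose proof (Hpdec q X ltac:(lra)). nra. }
    unfold opp; simpl. lra.
Qed.

Lemma candidate_welfare_ge : - d * (X * X / 2 + Q) <= welfare N p C x.
Proof.
  rewrite (welfare_eq_RInt N p C x Hpcont candidate_nonneg).
  pose proof integral_to_total_ge. pose proof candidate_cost_le. lra.
Qed.

Lemma candidate_welfare_pos s : 0 <= s -> p s = c0 -> 0 < welfare N p C x.
Proof.
  intros Hs Hps. rewrite (welfare_eq_RInt N p C x Hpcont candidate_nonneg).
  pose proof (integral_to_total_gt s Hs Hps). pose proof candidate_cost_le.
  pose proof price_slope_nonpos.
  pose proof (sumN_nonneg N (fun n => x n * x n)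
                ltac:(intros n Hn; pose proof (candidate_nonneg n Hn); nra)).
  nra.
Qed.

Lemma welfare_le_candidate s c y : 0 <= s -> p s = c0 -> dpl s < 0 ->
  - d <= c * - dpl s -> nonneg_vec N y ->
  welfare N p C y <= welfare N p C x + - d * (x m * X - Q + c * (x m * x m) / 2).
Proof.
  intros Hs Hps Hdls Hcd Hy.
  pose proof (sumN_nonneg N y Hy) as HY.
  rewrite (welfare_eq_RInt N p C y Hpcont Hy), (welfare_eq_RInt N p C x Hpcont candidate_nonneg).
  rewrite (RInt_Chasles_nonneg p 0 X (sumN N y) Hpcont (Rle_refl 0) total_output_nonneg HY).
  pose proof (integral_beyond_total s (sumN N y) Hs Hps Hdls HY) as Hbeyond.
  pose proof (cost_ge_candidate y Hy).
  pose proof price_slope_nonpos. pose proof largest_output_pos.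
  (* the surplus triangle is controlled by c *)
  assert ((- d * x m) * (- d * x m) / (2 * - dpl s) <= - d * (c * (x m * x m)) / 2).
  { apply Rmult_le_reg_r with (2 * - dpl s); [lra|].
    replace ((- d * x m) * (- d * x m) / (2 * - dpl s) * (2 * - dpl s))
      with (- d * - d * (x m * x m)) by (field; lra).
    assert (- d * - d <= - d * (c * - dpl s)) by (apply Rmult_le_compat_l; lra).
    nra. }
  nra.
Qed.

End CournotCandidate.

Theorem corollary2
  (N : nat) (p dpl dpr : R -> R) (C dC : nat -> R -> R) (s t : R) :
  (1 <= N)%nat ->
  assumption1 N C dC ->
  assumption2 p dpl dpr ->
  assumption3 N p dC ->
  assumption4 N p dC ->
  convex_on_nonneg p ->
  is_inf (fun q => 0 <= q /\ p q = minN N (fun n => dC n 0)) s ->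
  is_inf (fun q => 0 <= q /\ p q + q * dpr q <= minN N (fun n => dC n q)) t ->
  dpl s < 0 ->
  forall x xS : nat -> R,
    cournot_candidate N p dpl dpr dC x ->
    social_optimum N p C xS ->
    f_bound (dpr t / dpl s) <= efficiency N p C x xS.
Proof.
  intros HN A1 A2 _ A4 Hpconv Hs Ht Hdls x xS Hcand [HxS Hopt].
  destruct A2 as [Hpcont [_ [Hpdec [_ [Hpr Hpl]]]]].
  destruct (argmax N x HN) as [m [Hm Hmax]].
  destruct (level_set_inf_attained p _ s Hpcont Hs) as [Hs0 Hps].
  assert (Hdt : dpr t <= dpr (sumN N x)) by (eapply right_deriv_at_t_le; eauto).
  assert (Hd : dpr (sumN N x) <= 0) by (eapply price_slope_nonpos; eauto).
  set (c := dpr t / dpl s).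
  assert (Hcs : c * dpl s = dpr t) by (unfold c; field; lra).
  assert (Hc : 0 <= c) by nra.
  assert (Hxnn : nonneg_vec N x) by apply Hcand.
  unfold efficiency.
  apply (welfare_ratio_bound c (- dpr (sumN N x)) (sumN N x) (x m)
           (sumN N (fun n => x n * x n))).
  - exact Hc.
  - lra.
  - split; [eapply largest_output_pos; eauto|apply sumN_term; auto].
  - apply (sumN_term N (fun n => x n * x n)); auto.
    intros n Hn; pose proof (Hxnn n Hn); nra.
  - eapply candidate_welfare_ge; eauto.
  - eapply candidate_welfare_pos with (s := s); eauto.
  - apply Hopt, Hxnn.
  - eapply welfare_le_candidate with (s := s) (c := c); eauto; lra.
Qed.
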